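(* Let $k,l$ be positive integers and $r:=k+l-1$. Then a set $S_{k,l}$ (in the sense of the recursive definition below) can be chosen to be a subset of $P_r$; more precisely, choosing at each recursive step the translation parameters $\delta_{k',l'}:=\delta_{k'+l'-1}$ and $\delta_{k',l'}':=\delta_{k'+l'-1}'$ yields valid choices (i.e., the required conditions ''to the right of'' and ''high above'' hold), and the resulting set $S_{k,l}$ is contained in $P_r$.
   Context: Define finite sets $P_r\subset\mathbb{Z}^2$ for integers $r\ge 0$ recursively: $P_0:=\{(0,0)\}$; for $r\ge 1$, $L_r:=P_{r-1}$, $R_r:=\{(x+\delta_r,\,y+\delta_r'):(x,y)\in L_r\}$ and $P_r:=L_r\cup R_r$, where $\delta_r:=3\cdot 4^{r-1}$ and $\delta_r':=(3r+1)\cdot 4^{r-1}$. For finite point sets $X,Y$ in the plane, $X$ is high above $Y$ if every line determined by two points of $X$ lies strictly above every point of $Y$, and every line determined by two points of $Y$ lies strictly below every point of $X$. The sets $S_{k,l}$ (for positive integers $k,l$) are defined recursively: $S_{k,l}:=\{(0,0)\}$ if $k\le 2$ or $l\le 2$; otherwise $S_{k,l}:=L_{k,l}\cup R_{k,l}$ where $L_{k,l}:=S_{k-1,l}$ and $R_{k,l}:=\{(x+\delta_{k,l},\,y+\delta_{k,l}'):(x,y)\in S_{k,l-1}\}$, with $\delta_{k,l}$ chosen so that every point of $R_{k,l}$ lies strictly to the right of every point of $L_{k,l}$, and $\delta_{k,l}'$ chosen so that $R_{k,l}$ is high above $L_{k,l}$. *)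

From mathcomp Require Import all_boot all_order all_algebra.
Set Implicit Arguments. Unset Strict Implicit. Unset Printing Implicit Defensive.
Import Order.TTheory GRing.Theory Num.Theory.
Local Open Scope ring_scope.

(* Points of Z^2; finite point sets are represented by sequences. *)
Definition pt := (int * int)%type.

Definition shift (a b : int) (X : seq pt) : seq pt :=
  [seq (x.1 + a, x.2 + b) | x <- X].

Definition delta (r : nat) : int := ((3 * 4 ^ r.-1)%N)%:Z.
Definition delta' (r : nat) : int := (((3 * r + 1) * 4 ^ r.-1)%N)%:Z.

Fixpoint P (r : nat) : seq pt :=
  match r with
  | 0%N => [:: (0, 0)]
  | r'.+1 => P r' ++ shift (delta r'.+1) (delta' r'.+1) (P r')
  end.

(* Point y lies strictly below the line through p and q (p, q with distinct
   x-coordinates; a vertical line is never "above" a point). *)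
Definition strictly_below_line (p q y : pt) : Prop :=
  p.1 != q.1 /\
  (y.2 - p.2) * (q.1 - p.1) ^+ 2 < (q.2 - p.2) * (y.1 - p.1) * (q.1 - p.1).

Definition strictly_above_line (p q y : pt) : Prop :=
  p.1 != q.1 /\
  (y.2 - p.2) * (q.1 - p.1) ^+ 2 > (q.2 - p.2) * (y.1 - p.1) * (q.1 - p.1).

Definition high_above (X Y : seq pt) : Prop :=
  (forall p q y, p \in X -> q \in X -> p != q -> y \in Y ->
     strictly_below_line p q y) /\
  (forall p q x, p \in Y -> q \in Y -> p != q -> x \in X ->
     strictly_above_line p q x).

Definition right_of (R L : seq pt) : Prop :=
  forall x y, x \in R -> y \in L -> y.1 < x.1.

Fixpoint S (k : nat) : nat -> seq pt :=
  match k with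
  | 0%N => fun _ => [:: (0, 0)]
  | k'.+1 => fix S2 (l : nat) : seq pt :=
      match l with
      | 0%N => [:: (0, 0)]
      | l'.+1 =>
          if (k'.+1 <= 2)%N || (l'.+1 <= 2)%N then [:: (0, 0)]
          else S k' l'.+1 ++
               shift (delta (k'.+1 + l'.+1).-1) (delta' (k'.+1 + l'.+1).-1) (S2 l')
      end
  end.

Definition SL (k l : nat) : seq pt := S k.-1 l.
Definition SR (k l : nat) : seq pt :=
  shift (delta (k + l).-1) (delta' (k + l).-1) (S k l.-1).

From mathcomp Require Import all_boot all_order all_algebra.
From mathcomp Require Import zify ring.
Set Implicit Arguments. Unset Strict Implicit. Unset Printing Implicit Defensive.
Import Order.TTheory GRing.Theory Num.Theory.
Local Open Scope ring_scope.

(* With N = 4^m, every point u of P_m satisfies 0 <= u.1 < N and lies below the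
   line of slope m+1 through the origin by at most N - m - 1.  From this strip
   invariant, the copy R_{m+1} is seen from L_{m+1} under slopes strictly between
   m+1 and m+2, so by induction every chord of P_m has slope < m+1.  Chords of
   slope < m+1 inside each half and slopes > m+1 across the halves give "high
   above".  Finally S_{k,l} sits inside P_{k+l-1} because its recursion uses the
   very same translations as P. *)

Lemma P_succ m : P m.+1 = P m ++ shift (delta m.+1) (delta' m.+1) (P m).
Proof. by []. Qed.

Lemma delta_succ m : delta m.+1 = 3 * (4 ^ m)%N%:Z.
Proof. by rewrite /delta /= PoszM. Qed.

Lemma delta'_succ m : delta' m.+1 = (3 * m%:Z + 4) * (4 ^ m)%N%:Z.
Proof. by rewrite /delta' /= PoszM; congr (_ * _); lia. Qed.

Lemma pow4_succ m : (4 ^ m.+1)%N%:Z = 4 * (4 ^ m)%N%:Z.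
Proof. by rewrite expnS PoszM. Qed.

Lemma pow4_ge1 m : 1 <= (4 ^ m)%N%:Z.
Proof. by rewrite lez_nat expn_gt0. Qed.

Lemma mem_shift a b X z :
  z \in shift a b X -> exists2 w, w \in X & z = (w.1 + a, w.2 + b).
Proof. by move/mapP. Qed.

Lemma origin_in_P m : (0, 0) \in P m.
Proof. by elim: m => [|m IH]; rewrite ?inE // P_succ mem_cat IH. Qed.

Definition strip (M N : int) (u : pt) : Prop :=
  0 <= u.1 < N /\ 0 <= (M + 1) * u.1 - u.2 <= N - M - 1.

Section StripInvariant.

Variables (M N : int).
Hypotheses (M_ge0 : 0 <= M) (N_ge1 : 1 <= N).

Let shiftN (w : pt) : pt := (w.1 + 3 * N, w.2 + (3 * M + 4) * N).

Lemma strip_succ u : strip M N u -> strip (M + 1) (4 * N) u.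
Proof. by case: u => a b; rewrite /strip /=; lia. Qed.

Lemma strip_shift_succ w : strip M N w -> strip (M + 1) (4 * N) (shiftN w).
Proof. by case: w => a b; rewrite /strip /=; lia. Qed.

Lemma strip_shift_slopes u w : strip M N u -> strip M N w ->
  let v := shiftN w in
  [/\ u.1 < v.1, (M + 1) * (v.1 - u.1) < v.2 - u.2
                & v.2 - u.2 < (M + 2) * (v.1 - u.1)].
Proof. by case: u => a b; case: w => c d; rewrite /strip /= => hu hw; split; lia. Qed.

End StripInvariant.

Lemma P_strip m u : u \in P m -> strip m%:Z (4 ^ m)%N%:Z u.
Proof.
elim: m u => [|m IH] u; first by rewrite inE => /eqP ->; rewrite /strip.
rewrite P_succ mem_cat delta_succ delta'_succ pow4_succ -[m.+1]addn1 PoszD.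
case/orP => [/IH | /mem_shift [w /IH hw ->]].
  exact/strip_succ/pow4_ge1.
exact: (strip_shift_succ (le0z_nat m) (pow4_ge1 m)).
Qed.

Lemma P_shift_slopes m u w : u \in P m -> w \in P m ->
  let v := (w.1 + delta m.+1, w.2 + delta' m.+1) in
  [/\ u.1 < v.1, (m%:Z + 1) * (v.1 - u.1) < v.2 - u.2
                & v.2 - u.2 < (m%:Z + 2) * (v.1 - u.1)].
Proof.
move=> /P_strip hu /P_strip hw; rewrite delta_succ delta'_succ.
exact: (strip_shift_slopes (le0z_nat m) (pow4_ge1 m)).
Qed.

(* Slope of the chord [p q] is < c.  The form is symmetric in p and q and
   forces p.1 != q.1. *)
Definition slope_lt (c : int) (p q : pt) : Prop :=
  (q.2 - p.2) * (q.1 - p.1) < c * (q.1 - p.1) ^+ 2.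

Lemma slope_ltC c p q : slope_lt c p q -> slope_lt c q p.
Proof. by rewrite /slope_lt -[q.2 - _]opprB -[q.1 - _]opprB sqrrN mulrNN. Qed.

Lemma slope_lt_neq c p q : slope_lt c p q -> p.1 != q.1.
Proof. by rewrite /slope_lt; apply: contraTneq => ->; rewrite subrr mulr0 expr0n mulr0 ltxx. Qed.

Lemma slope_lt_le c c' p q : c <= c' -> slope_lt c p q -> slope_lt c' p q.
Proof. by move=> hc /lt_le_trans; apply; rewrite ler_wpM2r ?sqr_ge0. Qed.

Lemma slope_lt_shift c a b p q :
  slope_lt c (p.1 + a, p.2 + b) (q.1 + a, q.2 + b) <-> slope_lt c p q.
Proof.
have subDr x y z : x + z - (y + z) = x - y :> int by ring.
by rewrite /slope_lt /= !subDr.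
Qed.

Lemma slope_lt_of_lt c p q :
  p.1 < q.1 -> q.2 - p.2 < c * (q.1 - p.1) -> slope_lt c p q.
Proof.
rewrite /slope_lt -subr_gt0 => hD hs.
by rewrite expr2 mulrA ltr_pM2r.
Qed.

Lemma P_slope_lt m u v : u \in P m -> v \in P m -> u != v ->
  slope_lt (m%:Z + 1) u v.
Proof.
elim: m u v => [|m IH] u v; first by rewrite !inE => /eqP -> /eqP ->; rewrite eqxx.
have weaken p q : slope_lt (m%:Z + 1) p q -> slope_lt (m.+1%:Z + 1) p q.
  by apply: slope_lt_le; lia.
have mixed p w : p \in P m -> w \in P m ->
    slope_lt (m.+1%:Z + 1) p (w.1 + delta m.+1, w.2 + delta' m.+1).
  move=> hp hw; have [hx _ hs] := P_shift_slopes hp hw.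
  by apply: slope_lt_of_lt => //; move: hs => /=; lia.
rewrite P_succ !mem_cat.
case/orP => [hu | /mem_shift [w hw ->]]; case/orP => [hv | /mem_shift [w' hw' ->]].
- by move=> huv; apply/weaken/IH.
- by move=> _; apply: mixed.
- by move=> _; apply/slope_ltC/mixed.
- move=> hww'; apply/weaken/slope_lt_shift/IH => //.
  by apply: contraNneq hww' => ->.
Qed.

Lemma ltr_slope_chain (R : numDomainType) (a b c e f : R) :
  0 < e -> 0 < b -> a < c * b -> c * e < f -> a * e < f * b.
Proof.
move=> he hb hab hef; apply: (@lt_trans _ _ (c * b * e)).
  by rewrite ltr_pM2r.
by rewrite mulrAC ltr_pM2r.
Qed.

Lemma sqr_diff_gt0 c p q : slope_lt c p q -> 0 < (q.1 - p.1) ^+ 2.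
Proof. by move/slope_lt_neq; rewrite lt_def sqr_ge0 andbT sqrf_eq0 subr_eq0 eq_sym. Qed.

Lemma below_line_of_slopes c p q y : y.1 < p.1 ->
  c * (p.1 - y.1) < p.2 - y.2 -> slope_lt c p q -> strictly_below_line p q y.
Proof.
rewrite -subr_gt0 => he hc hs; split; first exact: slope_lt_neq hs.
have := ltr_slope_chain he (sqr_diff_gt0 hs) hs hc.
rewrite -ltrN2; congr (_ < _); ring.
Qed.

Lemma above_line_of_slopes c p q x : p.1 < x.1 ->
  c * (x.1 - p.1) < x.2 - p.2 -> slope_lt c p q -> strictly_above_line p q x.
Proof.
rewrite -subr_gt0 => he hc hs; split; first exact: slope_lt_neq hs.
have := ltr_slope_chain he (sqr_diff_gt0 hs) hs hc.
by rewrite mulrAC.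
Qed.

Lemma shift_P_separates m X Y : {subset X <= P m} -> {subset Y <= P m} ->
  let R := shift (delta m.+1) (delta' m.+1) X in
  right_of R Y /\ high_above R Y.
Proof.
move=> sX sY; split; [|split].
- by move=> _ y /mem_shift [w /sX hw ->] /sY hy; case: (P_shift_slopes hy hw).
- move=> _ _ y /mem_shift [w /sX hw ->] /mem_shift [w' /sX hw' ->] hne /sY hy.
  have [hx hc _] := P_shift_slopes hy hw.
  apply: below_line_of_slopes hx hc _; apply/slope_lt_shift/P_slope_lt => //.
  by apply: contraNneq hne => ->.
- move=> p q _ /sY hp /sY hq hne /mem_shift [w /sX hw ->].
  have [hx hc _] := P_shift_slopes hp hw.
  exact: above_line_of_slopes hx hc (P_slope_lt hp hq hne).
Qed.

Lemma S_sub_P k l : {subset S k l <= P (k + l).-1}.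
Proof.
elim: k l => [|k IHk] l; first by move=> z; rewrite inE => /eqP ->; exact: origin_in_P.
elim: l => [|l IHl] z /=; first by rewrite inE => /eqP ->; exact: origin_in_P.
case: ifP => _; first by rewrite inE => /eqP ->; exact: origin_in_P.
rewrite addnS P_succ !mem_cat => /orP [hz | /mapP [x hx ->]].
  by have := IHk _ _ hz; rewrite addnS => ->.
by rewrite map_f ?orbT //; exact: IHl.
Qed.

Theorem proposition2 (k l : nat) : (0 < k)%N -> (0 < l)%N ->
  (forall k' l', (2 < k' <= k)%N -> (2 < l' <= l)%N ->
     right_of (SR k' l') (SL k' l') /\ high_above (SR k' l') (SL k' l')) /\
  {subset S k l <= P (k + l).-1}.
Proof.
move=> _ _; split; last exact: S_sub_P.
move=> k' l' /andP [hk _] /andP [hl _].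
rewrite /SR /SL; have -> : (k' + l').-1 = (k' + l' - 2).+1 by lia.
apply: shift_P_separates.
- by have := @S_sub_P k' l'.-1; have -> : (k' + l'.-1).-1 = (k' + l' - 2)%N by lia.
- by have := @S_sub_P k'.-1 l'; have -> : (k'.-1 + l').-1 = (k' + l' - 2)%N by lia.
Qed.
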